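(* Let $A$ be a replete general event structure. Then the map $\max_A:\mathit{ges}(\mathit{er}(A))\to A$ is an isomorphism of general event structures.
   Context: A general event structure $(E,\mathrm{Con},\vdash)$: $\mathrm{Con}$ a nonempty subset-closed family of finite subsets of $E$; $\vdash\subseteq\mathrm{Con}\times E$ with $Y\in\mathrm{Con}$, $X\subseteq Y$, $X\vdash e\Rightarrow Y\vdash e$. Configurations: subsets that are consistent (finite subsets in $\mathrm{Con}$) and secured (each $e\in x$ has $e_1,\dots,e_n=e$ in $x$ with $\{e_1,\dots,e_{i-1}\}\vdash e_i$); $\mathcal C(E)$ denotes finite configurations, $\mathcal C^\infty(E)$ all. It is replete iff every $e$ has some $X\in\mathrm{Con}$ with $X\vdash e$; every $X\in\mathrm{Con}$ is contained in some finite configuration; and whenever $X\vdash e$ there is a finite configuration $x$ with $e\in x\subseteq X\cup\{e\}$. Maps of general event structures: partial functions $f$ such that $X\in\mathrm{Con}\Rightarrow fX\in\mathrm{Con}'$ and $f$ is injective on $X$, and $X\vdash e$ with $f(e)$ defined implies $fX\vdash' f(e)$. Event structure with equivalence (ese): a prime event structure $(P,\le,\mathrm{Con})$ (partial order with finite down-sets $[p]$, subset-closed nonempty $\mathrm{Con}$ of finite sets containing singletons, with $X\in\mathrm{Con}$, $e\le e'\in X\Rightarrow X\cup\{e\}\in\mathrm{Con}$) together with an equivalence $\equiv$ on $P$. $\mathit{ges}(P)$: events are $\equiv$-classes; a set of classes $X$ is consistent iff it is the set of classes of some $Y\in\mathrm{Con}$; $X\vdash e$ iff $X$ is consistent and $e=\{p\}_\equiv$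 for some $p$ whose down-set's classes lie in $X\cup\{e\}$. Causal realisations of a family $\mathcal A$ with $A=\bigcup\mathcal A$: partial order $(E,\le)$ with finite down-sets and $\rho:E\to A$ mapping down-closed sets into $\mathcal A$; maps: partial surjections preserving down-closed sets and commuting with $\rho$ where defined; $\rho'\preceq\rho$ iff there is a map $\rho\to\rho'$; extremal: every total map out of it is an isomorphism. $\mathit{er}(A)$: events a chosen representative per isomorphism class of extremal realisations of $\mathcal C^\infty(A)$ with a top element, $\max_A(p)$ the image of the top; order $\preceq$; finite $X$ consistent iff $\max_A$ of its down-closure is in $\mathcal C^\infty(A)$; $p\equiv p'$ iff $\max_A(p)=\max_A(p')$. $\max_A:\mathit{ges}(\mathit{er}(A))\to A$ sends the class of $p$ to $\max_A(p)$. *)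

From mathcomp Require Import all_boot.
Set Implicit Arguments. Unset Strict Implicit. Unset Printing Implicit Defensive.

Definition pset (T : Type) := T -> Prop.
Definition psubset (T : Type) (X Y : pset T) : Prop := forall x, X x -> Y x.
Definition pfinite (T : Type) (X : pset T) : Prop :=
  exists n (f : 'I_n -> T), forall x, X x -> exists i, f i = x.
Definition pimage (T U : Type) (f : T -> option U) (X : pset T) : pset U :=
  fun b => exists a, X a /\ f a = Some b.

Record gesd := GESD {
  gev : Type;
  gCon : pset (pset gev);
  gent : pset gev -> gev -> Prop
}.
Arguments gCon : clear implicits.
Arguments gent : clear implicits.

Definition is_ges (A : gesd) : Prop :=
  (forall X, gCon A X -> pfinite X) /\
  (exists X, gCon A X) /\
  (forall X Y, gCon A Y -> psubset X Y -> gCon A X) /\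
  (forall X e, gent A X e -> gCon A X) /\
  (forall X Y e, gCon A Y -> psubset X Y -> gent A X e -> gent A Y e).

Definition consistent (A : gesd) (x : pset (gev A)) : Prop :=
  forall X, pfinite X -> psubset X x -> gCon A X.

Definition secured (A : gesd) (x : pset (gev A)) : Prop :=
  forall e, x e -> exists (n : nat) (s : nat -> gev A),
    0 < n /\ s n.-1 = e /\ (forall i, i < n -> x (s i)) /\
    (forall i, i < n -> gent A (fun a => exists j, j < i /\ s j = a) (s i)).

Definition config (A : gesd) (x : pset (gev A)) : Prop :=
  consistent x /\ secured x.
Definition fconfig (A : gesd) (x : pset (gev A)) : Prop :=
  config x /\ pfinite x.

Definition replete (A : gesd) : Prop :=
  (forall e, exists X, gCon A X /\ gent A X e) /\
  (forall X, gCon A X -> exists x, fconfig x /\ psubset X x) /\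
  (forall X e, gent A X e ->
     exists x, fconfig x /\ x e /\ psubset x (fun a => X a \/ a = e)).

Definition ges_map (A B : gesd) (f : gev A -> option (gev B)) : Prop :=
  (forall X, gCon A X ->
     gCon B (pimage f X) /\
     (forall a b c, X a -> X b -> f a = Some c -> f b = Some c -> a = b)) /\
  (forall X e e', gent A X e -> f e = Some e' -> gent B (pimage f X) e').

Definition ges_iso (A B : gesd) (f : gev A -> option (gev B)) : Prop :=
  ges_map f /\
  exists g : gev B -> option (gev A), ges_map g /\
    (forall a, obind g (f a) = Some a) /\ (forall b, obind f (g b) = Some b).

Record freal (T : Type) := FReal {
  fr_n : nat;
  fr_le : 'I_fr_n -> 'I_fr_n -> Prop;
  fr_rho : 'I_fr_n -> T
}.
Arguments fr_n {T}.
Arguments fr_le {T} f : rename.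
Arguments fr_rho {T} f : rename.

Definition downclosed (T : Type) (r : freal T) (D : pset 'I_(fr_n r)) : Prop :=
  forall a b, D b -> fr_le r a b -> D a.
Arguments downclosed {T} r D.

(* a causal realisation of C^oo(A): partial order, rho maps down-closed sets
   to configurations (down-sets are automatically finite) *)
Definition is_real (A : gesd) (r : freal (gev A)) : Prop :=
  (forall a, fr_le r a a) /\
  (forall a b, fr_le r a b -> fr_le r b a -> a = b) /\
  (forall a b c, fr_le r a b -> fr_le r b c -> fr_le r a c) /\
  (forall D, downclosed r D ->
     config (fun e => exists a, D a /\ fr_rho r a = e)).

Definition rmap (T : Type) (r r' : freal T)
    (f : 'I_(fr_n r) -> option 'I_(fr_n r')) : Prop :=
  (forall b, exists a, f a = Some b) /\
  (forall D, downclosed r D -> downclosed r' (pimage f D)) /\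
  (forall a b, f a = Some b -> fr_rho r' b = fr_rho r a).

Definition rtotal (T : Type) (r r' : freal T)
    (f : 'I_(fr_n r) -> option 'I_(fr_n r')) : Prop :=
  forall a, exists b, f a = Some b.

Definition riso (T : Type) (r r' : freal T)
    (f : 'I_(fr_n r) -> option 'I_(fr_n r')) : Prop :=
  rmap f /\ exists g : 'I_(fr_n r') -> option 'I_(fr_n r), rmap g /\
    (forall a, obind g (f a) = Some a) /\ (forall b, obind f (g b) = Some b).

Definition risomorphic (T : Type) (r r' : freal T) : Prop :=
  exists f, @riso T r r' f.

Definition extremal (A : gesd) (r : freal (gev A)) : Prop :=
  forall (r' : freal (gev A)) (f : 'I_(fr_n r) -> option 'I_(fr_n r')),
    is_real r' -> rmap f -> rtotal f -> riso f.

Definition has_top (T : Type) (r : freal T) : Prop :=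
  exists t, forall a, fr_le r a t.

Definition rmax (T : Type) (r : freal T) (e : T) : Prop :=
  exists t, (forall a, fr_le r a t) /\ fr_rho r t = e.

Definition er_pred (A : gesd) (r : freal (gev A)) : Prop :=
  is_real r /\ extremal r /\ has_top r.

Definition erev (A : gesd) : Type :=
  { C : pset (freal (gev A)) |
    exists r, er_pred r /\ forall r', C r' <-> (is_real r' /\ risomorphic r r') }.

Definition er_le (A : gesd) (p q : erev A) : Prop :=
  exists rp rq (f : 'I_(fr_n rq) -> option 'I_(fr_n rp)),
    proj1_sig p rp /\ proj1_sig q rq /\ rmap f.

Definition er_max (A : gesd) (p : erev A) (e : gev A) : Prop :=
  exists r, proj1_sig p r /\ rmax r e.

Definition er_Con (A : gesd) (X : pset (erev A)) : Prop :=
  pfinite X /\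
  config (fun e => exists p q, X p /\ er_le q p /\ er_max q e).

Definition er_eqv (A : gesd) (p q : erev A) : Prop :=
  exists e, er_max p e /\ er_max q e.

Definition eseclass (P : Type) (eqv : P -> P -> Prop) : Type :=
  { C : pset P | exists p, forall q, C q <-> eqv p q }.

Definition ese_Con (P : Type) (Con : pset (pset P)) (eqv : P -> P -> Prop)
    (X : pset (eseclass eqv)) : Prop :=
  exists Y, Con Y /\ forall c, X c <-> exists y, Y y /\ proj1_sig c y.

Definition ese_ent (P : Type) (le : P -> P -> Prop) (Con : pset (pset P))
    (eqv : P -> P -> Prop) (X : pset (eseclass eqv)) (c : eseclass eqv) : Prop :=
  ese_Con Con X /\
  exists p, proj1_sig c p /\
    forall q, le q p -> exists d : eseclass eqv, proj1_sig d q /\ (X d \/ d = c).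

Definition ges_of_ese (P : Type) (le : P -> P -> Prop) (Con : pset (pset P))
    (eqv : P -> P -> Prop) : gesd :=
  @GESD (eseclass eqv) (@ese_Con P Con eqv) (@ese_ent P le Con eqv).

Definition ges_er (A : gesd) : gesd :=
  ges_of_ese (@er_le A) (@er_Con A) (@er_eqv A).

Definition maxA_graph (A : gesd) (c : gev (ges_er A)) (e : gev A) : Prop :=
  exists p : erev A, proj1_sig (c : eseclass (@er_eqv A)) p /\ er_max p e.

From mathcomp Require Import all_boot zify.
From Stdlib Require Import Classical ClassicalEpsilon ProofIrrelevance.
From Stdlib Require Import FunctionalExtensionality PropExtensionality.

Set Implicit Arguments. Unset Strict Implicit. Unset Printing Implicit Defensive.

(* The inverse of max_A sends an event e to the class of extremal realisations
   with top e. Such realisations exist: by repleteness e lies in a finite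
   configuration, a securing chain for e is a linear realisation with top e, and
   pushing it forward along total maps that are not isomorphisms must stop, since
   such a map strictly decreases the size or, at equal size, the number of
   related pairs. Every point of a realisation is the top of an extremal
   realisation below it, so the maxima of the events below an extremal
   realisation form a configuration; this makes max_A a map, and applied to the
   configurations that repleteness provides for consistent and enabling sets it
   makes the inverse a map too. *)

Definition decb (P : Prop) : bool := if excluded_middle_informative P then true else false.

Lemma decbP (P : Prop) : reflect P (decb P).
Proof. by rewrite /decb; case: excluded_middle_informative => h; constructor. Qed.

Lemma pset_ext T (X Y : pset T) : (forall x, X x <-> Y x) -> X = Y.
Proof.
by move=> h; apply: functional_extensionality => x; apply: propositional_extensionality.
Qed.

Lemma pfinite_sub T (X Y : pset T) : psubset X Y -> pfinite Y -> pfinite X.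
Proof. by move=> hXY [n [f hf]]; exists n, f => x /hXY /hf. Qed.

Lemma pfinite_image T U (f : T -> U) (X : pset T) :
  pfinite X -> pfinite (fun y => exists2 x, X x & y = f x).
Proof. by move=> [n [g hg]]; exists n, (f \o g) => _ [x /hg [i <-] ->]; exists i. Qed.

Lemma first_hit T (s : nat -> T) n e : 0 < n -> s n.-1 = e ->
  exists2 i, i < n & s i = e /\ forall j, j < i -> s j <> e.
Proof.
move=> n_gt0 sn; have hex : exists i, decb (s i = e) by exists n.-1; apply/decbP.
case: (ex_minnP hex) => i /decbP si hmin; exists i.
  by apply: leq_ltn_trans (hmin n.-1 _) _; [apply/decbP | rewrite prednK].
by split=> // j ji /decbP /hmin; rewrite leqNgt ji.
Qed.

Lemma obind_someP (X Y : Type) (f : X -> option Y) (g : Y -> option X) a :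
  obind g (f a) = Some a -> exists b, f a = Some b /\ g b = Some a.
Proof. by case: (f a) => [b|] //= h; exists b. Qed.

Section Realisations.
Variable T : Type.
Implicit Types r : freal T.

Lemma rmap_id r : @rmap T r r (fun a => Some a).
Proof.
split=> [b|]; first by exists b.
split=> [D hD a b [b' [Db [<-]]] ab|a b [<-] //].
by exists a; split=> //; exact: hD ab.
Qed.

Lemma rmap_comp r1 r2 r3 f g : @rmap T r1 r2 f -> @rmap T r2 r3 g -> rmap (pcomp g f).
Proof.
move=> [fsurj [fdown frho]] [gsurj [gdown grho]]; split.
  move=> c; have [b gb] := gsurj c; have [a fa] := fsurj b.
  by exists a; rewrite /pcomp fa.
split=> [D hD|a c]; last first.
  by rewrite /pcomp; case fa: (f a) => [b|] //= gb; rewrite (grho _ _ gb) (frho _ _ fa).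
have -> : pimage (pcomp g f) D = pimage g (pimage f D).
  apply: pset_ext => c; split.
  - move=> [a [Da]]; rewrite /pcomp; case fa: (f a) => [b|] //= gb.
    by exists b; split=> //; exists a.
  - by move=> [b [[a [Da fa]] gb]]; exists a; rewrite /pcomp fa.
exact/gdown/fdown.
Qed.

Lemma riso_id r : @riso T r r (fun a => Some a).
Proof. by split; [|exists (fun a => Some a); split]; try exact: rmap_id. Qed.

Lemma riso_comp r1 r2 r3 f g : @riso T r1 r2 f -> @riso T r2 r3 g -> riso (pcomp g f).
Proof.
move=> [hf [f' [hf' [ff' f'f]]]] [hg [g' [hg' [gg' g'g]]]].
split; first exact: rmap_comp hf hg.
exists (pcomp f' g'); split; first exact: rmap_comp hg' hf'.
split=> [a|c].
- have [b [fa f'b]] := obind_someP (ff' a); have [c [gb g'c]] := obind_someP (gg' b).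
  by rewrite /pcomp fa /= gb /= g'c /= f'b.
- have [b [g'c gb]] := obind_someP (g'g c); have [a [f'b fa]] := obind_someP (f'f b).
  by rewrite /pcomp g'c /= f'b /= fa /= gb.
Qed.

Lemma risomorphic_sym r r' : @risomorphic T r r' -> risomorphic r' r.
Proof. by move=> [f [hf [g [hg [fg gf]]]]]; exists g; split=> //; exists f. Qed.

Lemma risomorphic_trans r1 r2 r3 :
  @risomorphic T r1 r2 -> risomorphic r2 r3 -> risomorphic r1 r3.
Proof. by move=> [f hf] [g hg]; exists (pcomp g f); exact: riso_comp. Qed.

Lemma rmap_rho_surj r r' f : @rmap T r r' f -> forall b, exists a, fr_rho r a = fr_rho r' b.
Proof. by move=> [fsurj [_ frho]] b; have [a fa] := fsurj b; exists a; rewrite (frho _ _ fa). Qed.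

Lemma rmap_section r r' f : @rmap T r r' f ->
  exists2 g : 'I_(fr_n r') -> 'I_(fr_n r), injective g & forall y, f (g y) = Some y.
Proof.
move=> [fsurj _].
pose g y := proj1_sig (constructive_indefinite_description _ (fsurj y)).
have fg y : f (g y) = Some y by rewrite /g; case: constructive_indefinite_description.
by exists g => // y1 y2 e; have := fg y1; rewrite e fg => -[].
Qed.

Lemma rmap_size_le r r' f : @rmap T r r' f -> fr_n r' <= fr_n r.
Proof. by move=> /rmap_section [g ginj _]; have := leq_card g ginj; rewrite !card_ord. Qed.

Definition rpairs r : nat :=
  #|[set p : 'I_(fr_n r) * 'I_(fr_n r) | decb (fr_le r p.1 p.2)]|.

(* Lexicographic in (size, number of related pairs), since [rpairs r <= fr_n r ^ 2]. *)
Definition rweight r : nat := fr_n r * (fr_n r * fr_n r + 1) + rpairs r.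

Lemma rpairs_le r : rpairs r <= fr_n r * fr_n r.
Proof. by rewrite /rpairs (leq_trans (max_card _)) // card_prod !card_ord. Qed.

Lemma rweight_lt_size r r' : fr_n r' < fr_n r -> rweight r' < rweight r.
Proof.
move=> hlt; rewrite /rweight; apply: leq_trans (leq_addr _ _).
have hsucc : (fr_n r').+1 * ((fr_n r').+1 * (fr_n r').+1 + 1) <= fr_n r * (fr_n r * fr_n r + 1).
  by apply: leq_mul => //; rewrite leq_add2r leq_mul.
apply: leq_trans hsucc; have := rpairs_le r'; move: (rpairs r') (fr_n r') => p n; nia.
Qed.

Section Preorder.
Variable r : freal T.
Hypothesis le_refl : forall a, fr_le r a a.
Hypothesis le_trans : forall a b c, fr_le r a b -> fr_le r b c -> fr_le r a c.

Lemma rmap_reflect_le r' (f : 'I_(fr_n r) -> option 'I_(fr_n r')) a b y :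
  rmap f -> f a = Some b -> fr_le r' y b -> exists x, fr_le r x a /\ f x = Some y.
Proof.
move=> [_ [fdown _]] fab yb.
have hD : downclosed r (fun x => fr_le r x a) by move=> u v hv hu; exact: le_trans hu hv.
by have [|x [hx fx]] := fdown _ hD y b _ yb; [exists a | exists x].
Qed.

Lemma rmap_same_size r' (f : 'I_(fr_n r) -> option 'I_(fr_n r')) :
  rmap f -> fr_n r' = fr_n r ->
  rpairs r' <= rpairs r /\ (rpairs r' = rpairs r -> riso f).
Proof.
move=> hf eqn; have [g ginj fg] := rmap_section hf.
have [h gh hg] : bijective g by apply: (inj_card_bij ginj); rewrite !card_ord eqn.
have fh a : f a = Some (h a) by rewrite -{1}(hg a) fg.
pose gg (p : 'I_(fr_n r') * 'I_(fr_n r')) := (g p.1, g p.2).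
have gginj : injective gg by move=> [a1 a2] [b1 b2] [/ginj -> /ginj ->].
pose S' := [set p : 'I_(fr_n r') * 'I_(fr_n r') | decb (fr_le r' p.1 p.2)].
pose S := [set p : 'I_(fr_n r) * 'I_(fr_n r) | decb (fr_le r p.1 p.2)].
have gg_le : gg @: S' \subset S.
  apply/subsetP => p /imsetP [[y z] /=]; rewrite inE => /decbP /= yz ->.
  rewrite inE /=; apply/decbP.
  have [x [xz fx]] := rmap_reflect_le hf (fg z) yz.
  by have -> : g y = x by have := fh x; rewrite fx => -[->].
have cardS' : rpairs r' = #|gg @: S'| by rewrite card_imset.
split=> [|eqp]; first by rewrite cardS' subset_leq_card.
have eqS : gg @: S' =i S by apply/subset_cardP; rewrite // -cardS'.
split=> //; exists (fun y => Some (g y)); split; last by split=> [a|b]; rewrite ?fh /= ?hg ?fg.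
split=> [b|]; first by exists (h b); rewrite hg.
split=> [D hD b b' [y [Dy [<-]]] hby|a b [<-]]; last first.
  by have [_ [_ frho]] := hf; rewrite (frho _ _ (fg a)).
have : (b, g y) \in S by rewrite inE; apply/decbP.
rewrite -eqS => /imsetP [[y1 z1] /=]; rewrite inE => /decbP /= yz [-> /ginj eqz].
by exists y1; split=> //; apply: hD yz; rewrite -eqz.
Qed.

Lemma rmap_weight_lt r' (f : 'I_(fr_n r) -> option 'I_(fr_n r')) :
  rmap f -> ~ riso f -> rweight r' < rweight r.
Proof.
move=> hf niso; case: (ltngtP (fr_n r') (fr_n r)) => [|hgt|heq].
- exact: rweight_lt_size.
- by move: (rmap_size_le hf); rewrite leqNgt hgt.
- have [hp hiso] := rmap_same_size hf heq.
  rewrite /rweight heq ltn_add2l ltn_neqAle hp andbT.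
  by apply/eqP => /hiso.
Qed.

End Preorder.

End Realisations.

Section Downset.
Variables (A : gesd) (r : freal (gev A)) (b : 'I_(fr_n r)).
Hypothesis hr : is_real r.

Definition downset : {pred 'I_(fr_n r)} := [pred x | decb (fr_le r x b)].

Definition rdown : freal (gev A) :=
  @FReal _ #|downset| (fun i j : 'I_#|downset| => fr_le r (enum_val i) (enum_val j))
    (fun i => fr_rho r (enum_val i)).

Let downset_b : b \in downset.
Proof. by apply/decbP; case: hr. Qed.

Let rk := enum_rank_in downset_b.

Let enum_val_le (i : 'I_#|downset|) : fr_le r (enum_val i) b.
Proof. exact/decbP/(enum_valP i). Qed.

Let rkK x : fr_le r x b -> enum_val (rk x) = x.
Proof. by move=> xb; apply: enum_rankK_in; apply/decbP. Qed.

Let enum_valK (i : 'I_#|downset|) : rk (enum_val i) = i.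
Proof. exact: enum_valK_in. Qed.

Lemma rdown_real : is_real rdown.
Proof.
have [hrefl [hanti [htrans hconf]]] := hr.
split=> [a|]; first exact: hrefl.
split=> [a c /= ac ca|]; first by apply: enum_val_inj; exact: hanti.
split=> [a c d /=|D0 hD0 /=]; first exact: htrans.
pose D x := fr_le r x b /\ D0 (rk x).
have hD : downclosed r D.
  move=> u v [vb Dv] uv; have ub := htrans _ _ _ uv vb.
  by split=> //; apply: (hD0 _ (rk v)) => //=; rewrite !rkK.
suff <- : (fun e => exists a, D a /\ fr_rho r a = e) =
    (fun e => exists a, D0 a /\ fr_rho r (enum_val a) = e) by exact: hconf.
apply: pset_ext => e; split.
- by move=> [a [[ab Da] <-]]; exists (rk a); rewrite rkK.
- move=> [a [Da <-]]; exists (enum_val a).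
  by split=> //; split; [exact: enum_val_le | rewrite enum_valK].
Qed.

Lemma rdown_rmax : rmax rdown (fr_rho r b).
Proof. by exists (rk b) => /=; rewrite rkK; [split=> // a; rewrite rkK | case: hr]. Qed.

Lemma rdown_rmap : exists f, @rmap _ r rdown f.
Proof.
exists (fun x => if x \in downset then Some (rk x) else None).
split=> [i|]; first by exists (enum_val i); rewrite enum_valP enum_valK.
split=> [D hD i j [x [Dx]]|x i /=]; last first.
  by case: ifP => // /decbP xb [<-]; rewrite rkK.
case: ifP => // /decbP xb [<-] /= ji.
exists (enum_val i); split; last by rewrite enum_valP enum_valK.
by apply: hD ji; rewrite rkK.
Qed.

Lemma rdown_size_lt : (exists y, ~ fr_le r y b) -> fr_n rdown < fr_n r.
Proof.
move=> [y yb] /=; rewrite -[X in _ < X]card_ord -(cardC downset).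
rewrite -[X in X < _]addn0 ltn_add2l; apply/card_gt0P; exists y.
by rewrite !inE; apply/negP => /decbP.
Qed.

End Downset.

Section Extremal.
Variable A : gesd.
Implicit Types (q r : freal (gev A)) (e : gev A).

Lemma nonextremal_shrink q e : is_real q -> rmax q e -> ~ extremal q ->
  exists q', is_real q' /\ rmax q' e /\ (exists f, @rmap _ q q' f) /\ rweight q' < rweight q.
Proof.
move=> hq [t [ht te]] hext.
have [r' [f [hr' [hf [htot niso]]]]] :
    exists r' f, is_real r' /\ @rmap _ q r' f /\ rtotal f /\ ~ riso f.
  apply: NNPP => H; apply: hext => r' f hr' hf htot; apply: NNPP => niso.
  by apply: H; exists r', f.
have [t' ft] := htot t.
have t'e : fr_rho r' t' = e by have [_ [_ frho]] := hf; rewrite (frho _ _ ft).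
case: (classic (forall y, fr_le r' y t')) => [htop | /not_all_ex_not nottop].
  have [qrefl [_ [qtrans _]]] := hq.
  exists r'; split=> //; split; first by exists t'.
  by split; [exists f | exact (rmap_weight_lt qrefl qtrans hf niso)].
exists (rdown t'); split; first exact: rdown_real.
split; first by rewrite -t'e; exact: rdown_rmax.
split; first by have [g hg] := rdown_rmap t' hr'; exists (pcomp g f); exact: rmap_comp hf hg.
by apply: rweight_lt_size; exact: leq_trans (rdown_size_lt nottop) (rmap_size_le hf).
Qed.

Lemma extremal_of_rmax q e : is_real q -> rmax q e ->
  exists rq, er_pred rq /\ rmax rq e /\ exists f, @rmap _ q rq f.
Proof.
move: {2}(rweight q).+1 (ltnSn (rweight q)) => N.
elim: N q => // N IH q hN hq hqe.
case: (classic (extremal q)) => hext.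
  have [t [ht _]] := hqe.
  exists q; split; first by split; [|split; [|exists t]].
  by split=> //; exists (fun a => Some a); exact: rmap_id.
have [q' [hq' [hq'e [[f hf] hlt]]]] := nonextremal_shrink hq hqe hext.
have [rq [hrq [hrqe [g hg]]]] := IH q' (leq_trans hlt hN) hq' hq'e.
by exists rq; split=> //; split=> //; exists (pcomp g f); exact: rmap_comp hf hg.
Qed.

Lemma extremal_below r b : is_real r ->
  exists rq, er_pred rq /\ rmax rq (fr_rho r b) /\ exists f, @rmap _ r rq f.
Proof.
move=> hr; have [f hf] := rdown_rmap b hr.
have [rq [hrq [hrqe [g hg]]]] := extremal_of_rmax (rdown_real b hr) (rdown_rmax b hr).
by exists rq; split=> //; split=> //; exists (pcomp g f); exact: rmap_comp hf hg.
Qed.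

End Extremal.

Section ErEvents.
Variable A : gesd.
Implicit Types (p q : erev A) (r : freal (gev A)) (e : gev A).

Lemma rmax_riso r r' f e : is_real r' -> @riso _ r r' f -> rmax r e -> rmax r' e.
Proof.
move=> [hrefl [_ [htrans _]]] [hf [g [hg [fg gf]]]] [t [ht te]].
have [t' [ft gt']] := obind_someP (fg t).
exists t'; split; last by have [_ [_ frho]] := hf; rewrite (frho _ _ ft).
move=> y; have [fsurj _] := hf; have [x fx] := fsurj y.
have [y' [y't gy']] := rmap_reflect_le hrefl htrans hg gt' (ht x).
by have := gf y'; rewrite gy' /= fx => -[->].
Qed.

Lemma rmax_uniq r e1 e2 : is_real r -> rmax r e1 -> rmax r e2 -> e1 = e2.
Proof. by move=> [_ [hanti _]] [t1 [h1 <-]] [t2 [h2 <-]]; rewrite (hanti _ _ (h2 t1) (h1 t2)). Qed.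

Lemma erev_real p r : proj1_sig p r -> is_real r.
Proof. by case: p => C [r0 [_ hC]] /= /hC []. Qed.

Lemma erev_risomorphic p r1 r2 : proj1_sig p r1 -> proj1_sig p r2 -> risomorphic r1 r2.
Proof.
case: p => C [r0 [_ hC]] /= /hC [_ h1] /hC [_ h2].
exact: risomorphic_trans (risomorphic_sym h1) h2.
Qed.

Lemma erev_rep p : exists r, proj1_sig p r /\ er_pred r.
Proof.
case: p => C [r0 [h0 hC]] /=; exists r0; split=> //; apply/hC.
by split; [case: h0 | exists (fun a => Some a); exact: riso_id].
Qed.

Lemma er_max_mem p e r : er_max p e -> proj1_sig p r -> rmax r e.
Proof.
move=> [r1 [pr1 m1]] pr; have [f hf] := erev_risomorphic pr1 pr.
exact: rmax_riso (erev_real pr) hf m1.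
Qed.

Lemma er_max_uniq p e1 e2 : er_max p e1 -> er_max p e2 -> e1 = e2.
Proof. by move=> h1 [r [pr m2]]; exact: rmax_uniq (erev_real pr) (er_max_mem h1 pr) m2. Qed.

Lemma er_max_ex p : exists e, er_max p e.
Proof.
have [r [pr [_ [_ [t ht]]]]] := erev_rep p.
by exists (fr_rho r t), r; split=> //; exists t.
Qed.

Definition er_maxf p : gev A := proj1_sig (constructive_indefinite_description _ (er_max_ex p)).

Lemma er_maxfP p : er_max p (er_maxf p).
Proof. by rewrite /er_maxf; case: constructive_indefinite_description. Qed.

Definition er_event r (hr : er_pred r) : erev A :=
  exist _ (fun r' => is_real r' /\ risomorphic r r')
    (ex_intro _ r (conj hr (fun _ => iff_refl _))).

Lemma er_event_mem r (hr : er_pred r) : proj1_sig (er_event hr) r.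
Proof. by split; [case: hr | exists (fun a => Some a); exact: riso_id]. Qed.

Lemma er_le_elim q p rq rp : er_le q p -> proj1_sig q rq -> proj1_sig p rp ->
  exists f, @rmap _ rp rq f.
Proof.
move=> [rq1 [rp1 [f [qrq1 [prp1 hf]]]]] qrq prp.
have [g [hg _]] := erev_risomorphic prp prp1.
have [h [hh _]] := erev_risomorphic qrq1 qrq.
by exists (pcomp h (pcomp f g)); apply: rmap_comp hh; exact: rmap_comp hg hf.
Qed.

Lemma er_le_refl p : er_le p p.
Proof.
have [r [pr _]] := erev_rep p.
by exists r, r, (fun a => Some a); split; [|split; [|exact: rmap_id]].
Qed.

Lemma er_le_trans q p s : er_le q p -> er_le p s -> er_le q s.
Proof.
move=> hqp hps.
have [rq [qrq _]] := erev_rep q; have [rp [prp _]] := erev_rep p; have [rs [srs _]] := erev_rep s.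
have [f hf] := er_le_elim hqp qrq prp; have [g hg] := er_le_elim hps prp srs.
by exists rq, rs, (pcomp f g); split; [|split; [|exact: rmap_comp hg hf]].
Qed.

Lemma er_le_max_rho q p r e : er_le q p -> proj1_sig p r -> er_max q e ->
  exists a, fr_rho r a = e.
Proof.
move=> hle pr [rq [qrq [t [_ <-]]]].
have [f hf] := er_le_elim hle qrq pr; exact: rmap_rho_surj hf t.
Qed.

Lemma er_le_of_rho p r b : proj1_sig p r -> exists2 q, er_le q p & er_max q (fr_rho r b).
Proof.
move=> pr; have [rq [hq [hm [f hf]]]] := extremal_below b (erev_real pr).
exists (er_event hq); first by exists rq, r, f; split=> //; exact: er_event_mem.
by exists rq; split=> //; exact: er_event_mem.
Qed.

End ErEvents.

Section Configurations.
Variable A : gesd.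
Implicit Types (p q : erev A) (x : pset (gev A)) (e : gev A).

Lemma config_chain_real x e : config x -> x e ->
  exists r : freal (gev A), is_real r /\ rmax r e /\ forall a, x (fr_rho r a).
Proof.
move=> [hcons hsec] xe.
have [[|n] [s [n_gt0 [sn [sx sent]]]]] := hsec e xe => //.
exists (@FReal _ n.+1 (fun i j : 'I_n.+1 => i <= j) (fun i => s i)).
split; last by split=> [|a]; [exists ord_max; split=> [a|] /=; [rewrite -ltnS|] | exact: sx].
split=> [a|]; first exact: leqnn.
split=> [a b /= ab ba|]; first by apply: val_inj; apply/eqP; rewrite eqn_leq ab ba.
split=> [a b c|D hD]; first exact: leq_trans.
split=> [X hX hsub|_ [a [Da <-]]].
  by apply: hcons => // y /hsub [a [_ <-]]; exact: sx.
exists a.+1, s; split=> //; split=> //; split=> [i hi|i hi]; last first.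
  by apply: sent; exact: leq_trans hi (ltn_ord a).
have hi' : i < n.+1 by exact: leq_trans hi (ltn_ord a).
by exists (Ordinal hi'); split=> //; apply: hD Da _; rewrite /= -ltnS.
Qed.

Lemma er_of_config x e : config x -> x e ->
  exists p, er_max p e /\ forall q e', er_le q p -> er_max q e' -> x e'.
Proof.
move=> hx xe; have [r [hr [hre hrx]]] := config_chain_real hx xe.
have [rq [hq [hm [f hf]]]] := extremal_of_rmax hr hre.
exists (er_event hq); split; first by exists rq; split; [exact: er_event_mem|].
move=> q e' hle hqe'; have [a <-] := er_le_max_rho hle (er_event_mem hq) hqe'.
by have [a' <-] := rmap_rho_surj hf a.
Qed.

Lemma er_max_secured p e : er_max p e ->
  exists n (s : nat -> gev A), 0 < n /\ s n.-1 = e /\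
    (forall i, i < n -> exists2 q, er_le q p & er_max q (s i)) /\
    (forall i, i < n -> gent A (fun a => exists j, j < i /\ s j = a) (s i)).
Proof.
move=> hpe; have [r [pr [hr _]]] := erev_rep p.
have [t [_ te]] := er_max_mem hpe pr.
have [_ [_ [_ hconf]]] := hr.
have [_ hsec] := hconf (fun _ => True) (fun _ _ _ _ => I).
have [n [s [n_gt0 [sn [sr sent]]]]] := hsec e (ex_intro _ t (conj I te)).
exists n, s; do !split=> //.
by move=> i /sr [b [_ <-]]; exact: er_le_of_rho.
Qed.

Lemma er_Con_intro (Y : pset (erev A)) x : pfinite Y -> consistent x ->
  (forall p q e, Y p -> er_le q p -> er_max q e -> x e) -> er_Con Y.
Proof.
move=> Yfin hx hYx; split=> //; split.
  move=> Z Zfin hsub; apply: hx Zfin _ => e /hsub [p [q [Yp [hle hm]]]].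
  exact: hYx Yp hle hm.
move=> e [p [q [Yp [hqp hqe]]]].
have [n [s [n_gt0 [sn [sdown sent]]]]] := er_max_secured hqe.
exists n, s; split=> //; split=> //; split=> // i /sdown [q' hq'q hq's].
by exists p, q'; do !split=> //; exact: er_le_trans hq'q hqp.
Qed.

End Configurations.

Section MaxMap.
Variable A : gesd.
Implicit Types (p q : erev A) (c : gev (ges_er A)) (e : gev A).

Lemma er_class_eq c1 c2 : (forall q, proj1_sig c1 q <-> proj1_sig c2 q) -> c1 = c2.
Proof.
case: c1 c2 => [C1 h1] [C2 h2] /= h.
by have e := pset_ext h; subst; f_equal; exact: proof_irrelevance.
Qed.

Lemma er_class_max c p e : proj1_sig c p -> er_max p e ->
  forall q, proj1_sig c q <-> er_max q e.
Proof.
case: c => [C [p0 hC]] /= /hC [e1 [m1 m2]] hpe q.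
rewrite (er_max_uniq hpe m2) in m1 *.
by split=> [/hC [e2 [m3 m4]]|hqe]; [rewrite (er_max_uniq m1 m3) | apply/hC; exists e1].
Qed.

Lemma maxA_graph_ex c : exists e, maxA_graph c e.
Proof.
case: c => [C [p0 hC]]; have [e hp0] := er_max_ex p0.
by exists e, p0; split=> //=; apply/hC; exists e.
Qed.

Definition maxA c : gev A := proj1_sig (constructive_indefinite_description _ (maxA_graph_ex c)).

Lemma maxA_mem c q : proj1_sig c q <-> er_max q (maxA c).
Proof.
rewrite /maxA; case: constructive_indefinite_description => e [p [cp hpe]] /=.
exact: er_class_max cp hpe q.
Qed.

Lemma maxA_graphE c e : maxA_graph c e <-> maxA c = e.
Proof.
split=> [[p [/maxA_mem hp hpe]]|<-]; first exact: er_max_uniq hp hpe.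
have [_ [p [cp _]]] := maxA_graph_ex c.
by exists p; split=> //; exact/maxA_mem.
Qed.

Lemma maxA_Con X : gCon (ges_er A) X -> gCon A (pimage (Some \o maxA) X).
Proof.
move=> [Y [[Yfin [Ycons _]] hXY]].
have hXY' e : pimage (Some \o maxA) X e -> exists2 y, Y y & er_max y e.
  move=> [c [Xc [<-]]]; have [y [Yy cy]] := (hXY c).1 Xc.
  by exists y => //; exact/maxA_mem.
apply: Ycons => [|e /hXY' [y Yy hye]].
  apply: (pfinite_sub _ (pfinite_image (@er_maxf A) Yfin)) => e /hXY' [y Yy hye].
  by exists y => //; exact: er_max_uniq hye (er_maxfP y).
by exists y, y; split=> //; split=> //; exact: er_le_refl.
Qed.

Section Replete.
Hypothesis hA : is_ges A.
Hypothesis hrep : replete A.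

Lemma er_max_surj e : exists p, er_max p e.
Proof.
have [hev [_ hent]] := hrep; have [X [_ hXe]] := hev e.
have [x [[hx _] [xe _]]] := hent _ _ hXe.
by have [p [hpe _]] := er_of_config hx xe; exists p.
Qed.

Lemma er_class_spec e : exists p, forall q, er_max q e <-> er_eqv p q.
Proof.
have [p hpe] := er_max_surj e; exists p => q.
by split=> [hqe|[e' [hpe' hqe']]]; [exists e | rewrite (er_max_uniq hpe hpe')].
Qed.

Definition er_class e : gev (ges_er A) := exist _ (fun q => er_max q e) (er_class_spec e).

Lemma maxA_er_class e : maxA (er_class e) = e.
Proof. by apply/maxA_graphE; have [p hpe] := er_max_surj e; exists p. Qed.

Lemma er_class_maxA c : er_class (maxA c) = c.
Proof. by apply: er_class_eq => q /=; rewrite maxA_mem. Qed.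

Lemma maxA_ent X c : gent (ges_er A) X c -> gent A (pimage (Some \o maxA) X) (maxA c).
Proof.
have [_ [_ [_ [_ ent_mono]]]] := hA.
move=> [hX [p [cp hbelow]]].
have [n [s [n_gt0 [sn [sdown sent]]]]] := er_max_secured ((maxA_mem c p).1 cp).
(* Cutting the chain at the first occurrence of [maxA c] keeps [c] out of the enabling set. *)
have [i hi [si hfirst]] := first_hit n_gt0 sn.
rewrite -si; apply: ent_mono (sent i hi); first exact: maxA_Con hX.
move=> _ [j [ji <-]]; have [q hqp hqs] := sdown j (ltn_trans ji hi).
have [d [dq [Xd | dc]]] := hbelow q hqp.
  by exists d; split=> //=; congr Some; exact: er_max_uniq ((maxA_mem d q).1 dq) hqs.
by subst d; case: (hfirst j ji); exact: er_max_uniq hqs ((maxA_mem c q).1 dq).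
Qed.

Lemma er_class_Con X : gCon A X -> gCon (ges_er A) (pimage (Some \o er_class) X).
Proof.
have [Con_fin _] := hA; have [_ [Con_config _]] := hrep.
move=> hX; have [x [[hx _] Xx]] := Con_config X hX.
have hpe e : exists p, er_max p e /\ (X e -> forall q e', er_le q p -> er_max q e' -> x e').
  case: (classic (X e)) => [/Xx xe | nXe]; last by have [p hpe] := er_max_surj e; exists p.
  by have [p [hpe hp]] := er_of_config hx xe; exists p.
pose pe e := proj1_sig (constructive_indefinite_description _ (hpe e)).
have peP e : er_max (pe e) e /\ (X e -> forall q e', er_le q (pe e) -> er_max q e' -> x e').
  by rewrite /pe; case: constructive_indefinite_description.
exists (fun p => exists2 e, X e & p = pe e); split.
  apply: er_Con_intro (pfinite_image pe (Con_fin _ hX)) hx.1 _.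
  by move=> p q e' [e Xe ->]; exact: (peP e).2 Xe q e'.
move=> c; split=> [[e [Xe [<-]]]|[y [[e Xe ->] cy]]].
  by exists (pe e); split; [exists e | exact: (peP e).1].
exists e; split=> //=; congr Some; apply: er_class_eq => q /=.
by rewrite (er_class_max cy (peP e).1 q).
Qed.

Lemma er_class_ent X e :
  gent A X e -> gent (ges_er A) (pimage (Some \o er_class) X) (er_class e).
Proof.
have [_ [_ [_ [ent_Con _]]]] := hA; have [_ [_ ent_config]] := hrep.
move=> hXe; split; first by apply: er_class_Con; exact: ent_Con hXe.
have [x [[hx _] [xe xX]]] := ent_config _ _ hXe.
have [p [hpe hp]] := er_of_config hx xe.
exists p; split=> // q hqp; exists (er_class (er_maxf q)); split; first exact: er_maxfP.
have [Xq | ->] := xX _ (hp _ _ hqp (er_maxfP q)); last by right.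
by left; exists (er_maxf q).
Qed.

Lemma ges_map_maxA : ges_map (Some \o maxA).
Proof.
split=> [X hX|X c e hXc [<-]]; last exact: maxA_ent.
split=> [|a b e _ _ [<-] [hab]]; first exact: maxA_Con.
by rewrite -(er_class_maxA a) -(er_class_maxA b) hab.
Qed.

Lemma ges_map_er_class : ges_map (Some \o er_class).
Proof.
split=> [X hX|X e c hXe [<-]]; last exact: er_class_ent.
split=> [|a b c _ _ [<-] /(congr1 (omap maxA))]; first exact: er_class_Con.
by rewrite /= !maxA_er_class => -[].
Qed.

End Replete.

End MaxMap.

Theorem mainTheorem3 (A : gesd) (hA : is_ges A) (hrep : replete A) :
  exists F : gev (ges_er A) -> option (gev A),
    (forall c e, F c = Some e <-> maxA_graph c e) /\ ges_iso F.
Proof.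
exists (Some \o (@maxA A)); split=> [c e|].
  by rewrite maxA_graphE /=; split=> [[]|->].
split; first exact: ges_map_maxA.
exists (Some \o er_class hrep); split; first exact: ges_map_er_class.
by split=> [c|e] /=; rewrite ?er_class_maxA ?maxA_er_class.
Qed.
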